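(* Let $V$ be a finite set of variables, let $D_{\mathit{ds}}$ be the causal ABA framework defined in the context, let $S$ be a complete extension of $D_{\mathit{ds}}$ and let $G(S)=(V,\{(u,v)\mid\mathit{arr}_{uv}\in S\})$. For all distinct $x,y\in V$ and all $\mathbf Z\subseteq V\setminus\{x,y\}$: if $(x\perp\!\!\!\perp y\mid\mathbf Z)\in S$ then $x$ and $y$ are d-separated given $\mathbf Z$ in $G(S)$.
   Context: ABA. An ABA framework is $D=(\mathcal L,\mathcal R,\mathcal A,\overline{\cdot})$ with sentences $\mathcal L$, rules $a_0\leftarrow a_1,\dots,a_n$ ($n\ge0$), assumptions $\mathcal A\subseteq\mathcal L$ and contrary function $\overline{\cdot}:\mathcal A\to\mathcal L$. $S\vdash q$ ($S\subseteq\mathcal A$) if there is a finite rooted labelled tree with root $q$, set of leaf labels $S$ or $S\cup\{\top\}$, and every inner node labelled by the head of a rule whose children are labelled by the distinct body elements (one child $\top$ for an empty body). $S$ attacks $T$ if some $S'\subseteq S$ derives $\overline a$ for some $a\in T$. Conflict-free: does not attack itself; $S$ defends $T$ if it attacks every attacker of $T$; admissible: conflict-free and self-defending; complete: admissible and contains every assumption set it defends. Graphs. A path is a sequence of distinct nodes with consecutive nodes adjacent; an inner node $x_i$ of $x_1\dots x_n$ is a collider if $(x_{i-1},x_i)$ and $(x_{i+1},x_i)$ are edges; descendants are nodes reachable by directed paths. For $\mathbf Z\subseteq V\setminus\{x,y\}$, an $x$-$y$-path is $\mathbf Z$-active if every collider on it is in $\mathbf Z$ or has a descendant in $\mathbf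 Z$ and every other node on it is not in $\mathbf Z$; $x,y$ are d-separated given $\mathbf Z$ if no $\mathbf Z$-active $x$-$y$-path exists. An $x$-$y$-collider-tree of a DAG $H$ is a subgraph $t$ of $H$ with an $x$-$y$-path $p_t$ in $t$ such that every node of $t$ not on $p_t$ is a descendant of a collider of $p_t$; it is $\mathbf Z$-active if $p_t$ is $\mathbf Z$-active in $(V,\text{edges of }t)$. The framework $D_{\mathit{ds}}$. Assumptions: $\mathit{arr}_{xy}$ for all ordered pairs of distinct $x,y\in V$; one $\mathit{noe}_{xy}=\mathit{noe}_{yx}$ per unordered pair; independence assumptions $(x\perp\!\!\!\perp y\mid\mathbf Z)$ for $\mathbf Z\subseteq V$, distinct $x,y\in V\setminus\mathbf Z$ (symmetric in $x,y$). Each assumption $a$ has its own distinct fresh contrary $\overline a$. Rules: (i) $\overline a\leftarrow b$ for distinct $a,b\in\{\mathit{arr}_{xy},\mathit{arr}_{yx},\mathit{noe}_{xy}\}$; (ii) for every sequence $x_1\dots x_k$ with consecutive elements distinct and $x_1=x_k$ and every $1\le i<k$: $\overline{\mathit{arr}_{x_ix_{i+1}}}\leftarrow\mathit{arr}_{x_1x_2},\dots,\mathit{arr}_{x_{k-1}x_k}$; (iii) $\mathit{dpath}_{xy}\leftarrow\mathit{arr}_{xy}$; $\mathit{dpath}_{xz}\leftarrow\mathit{dpath}_{xy},\mathit{arr}_{yz}$; $e_{xy}\leftarrow\mathit{arr}_{xy}$; $e_{xy}\leftarrow\mathit{arr}_{yx}$; $\overline{\mathit{noe}_{xy}}\leftarrow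 e_{xy}$; (iv) for all distinct $x,y$, $\mathbf Z\subseteq V\setminus\{x,y\}$ and every $\mathbf Z$-active $x$-$y$-collider-tree $t$ (of any DAG on $V$), $\overline{(x\perp\!\!\!\perp y\mid\mathbf Z)}\leftarrow\{\mathit{arr}_{uv}\mid(u,v)\text{ an edge of }t\}$. *)

From Stdlib Require Import Relations List.
From mathcomp Require Import all_boot.
Set Implicit Arguments.
Unset Strict Implicit.
Unset Printing Implicit Defensive.

(* A rule  head <- body  has a (finite) set of body sentences, given as a
   predicate; assumptions are a predicate on sentences; the contrary is a
   function (only its values on assumptions matter). *)
Record ABA := MkABA {
  sent : Type;
  rule : sent -> (sent -> Prop) -> Prop;
  is_asm : sent -> Prop;
  contrary : sent -> sent
}.

(* Finite rooted labelled trees; label [None] stands for the symbol T (top). *)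
Inductive dtree (L : Type) := DNode (lab : option L) (ch : list (dtree L)).
Arguments DNode {L}.

Definition dlabel L (t : dtree L) : option L := let: DNode l _ := t in l.

Fixpoint leaves L (t : dtree L) : list (option L) :=
  match t with
  | DNode l ch =>
      if ch is [::] then [:: l]
      else (fix lv (c : list (dtree L)) :=
              match c with [::] => [::] | t' :: c' => leaves t' ++ lv c' end) ch
  end.

Fixpoint wf_tree (D : ABA) (t : dtree (sent D)) : Prop :=
  match t with
  | DNode l ch =>
      (ch = [::] /\ (l = None \/ exists a, l = Some a /\ @is_asm D a))
      \/ ((exists q body, l = Some q /\ @rule D q body /\
            (((forall s, ~ body s) /\ map (@dlabel _) ch = [:: None])
             \/ ((exists s, body s) /\ List.NoDup (map (@dlabel _) ch) /\
                 (forall o, List.In o (map (@dlabel _) ch) <->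
                            exists s, o = Some s /\ body s))))
          /\ (fix wfl (c : list (dtree (sent D))) : Prop :=
                match c with [::] => True | t' :: c' => wf_tree t' /\ wfl c' end) ch)
  end.

Definition asm_set (D : ABA) (S : sent D -> Prop) := forall a, S a -> @is_asm D a.
Definition subset_of (D : ABA) (S T : sent D -> Prop) := forall a, S a -> T a.

(* S |- q : a derivation tree with root q whose set of leaf labels is S or S u {T}. *)
Definition derives (D : ABA) (S : sent D -> Prop) (q : sent D) : Prop :=
  asm_set S /\
  exists t, wf_tree t /\ dlabel t = Some q /\
            (forall a, S a <-> List.In (Some a) (leaves t)).

Definition attacks (D : ABA) (S T : sent D -> Prop) : Prop :=
  exists S', subset_of S' S /\ exists a, T a /\ derives S' (@contrary D a).

Definition conflict_free (D : ABA) (S : sent D -> Prop) := ~ attacks S S.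

Definition defends (D : ABA) (S T : sent D -> Prop) :=
  forall U, asm_set U -> attacks U T -> attacks S U.

Definition admissible (D : ABA) (S : sent D -> Prop) :=
  asm_set S /\ conflict_free S /\ defends S S.

Definition complete (D : ABA) (S : sent D -> Prop) :=
  admissible S /\ forall T, asm_set T -> defends S T -> subset_of T S.

Section Graphs.
Variable V : finType.
Implicit Types (E : V -> V -> Prop) (p : seq V) (x y : V) (Z : {set V}).

Definition adj E u v := E u v \/ E v u.

Definition desc E u w := clos_refl_trans V E u w.

Definition is_xy_path E x y p :=
  p <> [::] /\ head x p = x /\ last x p = y /\ uniq p /\
  forall i, i.+1 < size p -> adj E (nth x p i) (nth x p i.+1).

Definition is_collider E x p i :=
  0 < i /\ i.+1 < size p /\
  E (nth x p i.-1) (nth x p i) /\ E (nth x p i.+1) (nth x p i).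

Definition Z_active E x Z p :=
  forall i, i < size p ->
    (is_collider E x p i ->
       (nth x p i \in Z \/ exists w, desc E (nth x p i) w /\ w \in Z)) /\
    (~ is_collider E x p i -> nth x p i \notin Z).

Definition d_separated E x y Z :=
  ~ exists p, is_xy_path E x y p /\ Z_active E x Z p.

Definition acyclic E := forall u v, E u v -> ~ desc E v u.

Definition collider_tree (H : V -> V -> Prop) (Nt : V -> Prop) (Et : V -> V -> Prop)
    x y p :=
  (forall u v, Et u v -> H u v /\ Nt u /\ Nt v) /\
  is_xy_path Et x y p /\
  (forall i, i < size p -> Nt (nth x p i)) /\
  (forall w, Nt w -> w \notin p ->
     exists i, is_collider Et x p i /\ desc Et (nth x p i) w).

End Graphs.

Section Dds.
Variable V : finType.

(* noe and independence assumptions are indexed by the unordered pair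
   {x,y} (as a set), which makes them symmetric by construction *)
Inductive asm_ds :=
  | Arr (x y : V)
  | Noe (pr : {set V})
  | Ind (pr : {set V}) (Z : {set V}).

Inductive sent_ds :=
  | SA (a : asm_ds)
  | SC (a : asm_ds)
  | Dpath (x y : V)
  | Ed (x y : V).

Definition noe (x y : V) := Noe [set x; y].
Definition indep (x y : V) (Z : {set V}) := Ind [set x; y] Z.

Definition is_asm_ds (s : sent_ds) : Prop :=
  match s with
  | SA (Arr x y) => x != y
  | SA (Noe pr) => #|pr| = 2
  | SA (Ind pr Z) => #|pr| = 2 /\ [disjoint pr & Z]
  | _ => False
  end.

Definition contrary_ds (s : sent_ds) : sent_ds :=
  match s with SA a => SC a | _ => s end.

Definition triple (x y : V) (a : asm_ds) :=
  a = Arr x y \/ a = Arr y x \/ a = noe x y.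

Inductive rule_ds : sent_ds -> (sent_ds -> Prop) -> Prop :=
  | R_excl x y a b : x != y -> triple x y a -> triple x y b -> a <> b ->
      rule_ds (SC a) (fun s => s = SA b)
  | R_cycle (x0 : V) (s : seq V) u v :
      path (fun a b => a != b) x0 s -> last x0 s = x0 ->
      (u, v) \in zip (x0 :: s) s ->
      rule_ds (SC (Arr u v))
        (fun l => exists u' v', (u', v') \in zip (x0 :: s) s /\ l = SA (Arr u' v'))
  | R_dpath1 x y : rule_ds (Dpath x y) (fun l => l = SA (Arr x y))
  | R_dpath2 x y z :
      rule_ds (Dpath x z) (fun l => l = Dpath x y \/ l = SA (Arr y z))
  | R_e1 x y : rule_ds (Ed x y) (fun l => l = SA (Arr x y))
  | R_e2 x y : rule_ds (Ed x y) (fun l => l = SA (Arr y x))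
  | R_noe x y : rule_ds (SC (noe x y)) (fun l => l = Ed x y)
  | R_dsep x y (Z : {set V}) (H : V -> V -> Prop) (Nt : V -> Prop)
      (Et : V -> V -> Prop) (p : seq V) :
      x != y -> x \notin Z -> y \notin Z ->
      acyclic H -> collider_tree H Nt Et x y p -> Z_active Et x Z p ->
      rule_ds (SC (indep x y Z))
        (fun l => exists u v, Et u v /\ l = SA (Arr u v)).

Definition D_ds : ABA := MkABA rule_ds is_asm_ds contrary_ds.

Definition G_of (S : sent_ds -> Prop) (u v : V) : Prop := S (SA (Arr u v)).

End Dds.

(* Suppose S contains (x _||_ y | Z) although G(S) has a Z-active x-y-path p.
   The subgraph of G(S) induced on p and on the descendants of its colliders
   is then a Z-active collider tree, and all its edges are arrows of S.  A
   conflict-free S makes G(S) acyclic, since the arrows along a directed cycle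
   would attack one another by rule (ii).  Hence rule (iv) applies to the tree,
   and S derives the contrary of its own independence assumption. *)

From Stdlib Require Import Relations List ClassicalEpsilon FinFun.
From mathcomp Require Import all_boot.

Set Implicit Arguments.
Unset Strict Implicit.
Unset Printing Implicit Defensive.

Lemma InP (T : eqType) (x : T) (s : seq T) : reflect (List.In x s) (x \in s).
Proof.
elim: s => [|a s IH] /=; first by right.
rewrite in_cons; apply: (iffP orP) => -[|H]; first by move/eqP->; left.
- by right; apply/IH.
- by move->; left; rewrite eqxx.
- by right; apply/IH.
Qed.

Lemma NoDup_cover (A : Type) (P : A -> Prop) (l : list A) :
  (forall a, P a -> List.In a l) ->
  exists l', List.NoDup l' /\ forall a, P a <-> List.In a l'.
Proof.
move=> Pl.
pose dec_eq (a b : A) := excluded_middle_informative (a = b).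
pose Pb a := if excluded_middle_informative (P a) then true else false.
exists (nodup dec_eq (filter Pb l)); split; first exact: NoDup_nodup.
move=> a; rewrite nodup_In filter_In /Pb.
by case: excluded_middle_informative => Pa; split=> [|[]] //; split=> //; apply: Pl.
Qed.

Lemma zip_path (T : eqType) (r : rel T) x s :
  (forall a b, (a, b) \in zip (x :: s) s -> r a b) -> path r x s.
Proof.
elim: s x => //= b s IH x rs; rewrite rs ?in_cons ?eqxx //=.
by apply: IH => a c acs; apply: rs; rewrite in_cons acs orbT.
Qed.

Section RuleDerivation.
Variable D : ABA.

Definition leaf (s : sent D) : dtree (sent D) := DNode (Some s) [::].

Lemma leaves_rule_node q l :
  l <> [::] -> leaves (DNode (Some q) (map leaf l)) = map Some l.
Proof.
case: l => [//|a l] _ /=; congr cons.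
by elim: l => //= b l ->.
Qed.

Lemma wf_rule_node q body l :
  rule q body -> List.NoDup l -> l <> [::] ->
  (forall s, body s <-> List.In s l) -> (forall s, body s -> is_asm s) ->
  wf_tree (DNode (Some q) (map leaf l)).
Proof.
move=> qbody NDl l_nil bodyl body_asm /=; right; split.
  exists q, body; do 2!split=> //; right.
  have ->: map (@dlabel _) (map leaf l) = map Some l by rewrite -map_comp.
  split; last split.
  - by case: l l_nil {NDl} bodyl => // s l _ bodyl; exists s; apply/bodyl; left.
  - by apply: Injective_map_NoDup => // a b [].
  - move=> o; apply: iff_trans (List.in_map_iff _ _ _) _.
    by split=> -[s []]; [move<- => /bodyl | move-> => /bodyl]; exists s.
have : forall s, List.In s l -> is_asm s by move=> s /bodyl/body_asm.
clear l_nil NDl bodyl; elim: l => //= a l IH l_asm; split.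
  by left; split=> //; right; exists a; split=> //; apply: l_asm; left.
by apply: IH => s ls; apply: l_asm; right.
Qed.

Lemma derives_by_rule q body (l : list (sent D)) :
  rule q body -> (forall s, body s -> is_asm s) -> (exists s, body s) ->
  (forall s, body s -> List.In s l) -> derives body q.
Proof.
move=> qbody body_asm [s0 body_s0] /NoDup_cover [l' [NDl' bodyl']].
have l'_nil : l' <> [::] by move=> l'E; move/bodyl': body_s0; rewrite l'E.
split=> //; exists (DNode (Some q) (map leaf l')); split; last split=> //.
  exact: wf_rule_node qbody NDl' l'_nil bodyl' body_asm.
move=> a; rewrite leaves_rule_node // bodyl'.
apply: iff_sym; apply: iff_trans (List.in_map_iff _ _ _) _.
by split=> [[b [[->]]]|la] //; exists a.
Qed.

End RuleDerivation.

Section ColliderTrees.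
Variable V : finType.
Implicit Types (E : V -> V -> Prop) (N : V -> Prop) (x y : V) (p : seq V).

Definition induced E N u v := E u v /\ N u /\ N v.

Lemma desc_walk E v u : desc E v u ->
  exists s, last v s = u /\ forall a b, (a, b) \in zip (v :: s) s -> E a b.
Proof.
move/clos_rt_rt1n_iff; elim=> [|a b c Eab _ [s [sc Es]]]; first by exists [::].
exists (b :: s); split=> // a' b'; rewrite /= in_cons => /orP[/eqP[-> ->] //|].
exact: Es.
Qed.

Lemma xy_path_edge E x y p : x != y -> is_xy_path E x y p -> exists u v, E u v.
Proof.
move=> neq_xy [p_nil [hp [lp [_ adjp]]]].
have size_p : 1 < size p.
  by case: p p_nil hp lp {adjp} neq_xy => [|a [|b p]] //= _ -> ->; rewrite eqxx.
by case: (adjp 0 size_p) => ?; do 2!eexists; eassumption.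
Qed.

Section ColliderClosure.
Variables (E : V -> V -> Prop) (x : V) (p : seq V).

Definition collider_closure w :=
  w \in p \/ exists i, is_collider E x p i /\ desc E (nth x p i) w.

(* The induced subgraph keeps every edge of p, so p has the same colliders in it. *)
Let Et := induced E collider_closure.

Lemma nth_collider_closure i : i < size p -> collider_closure (nth x p i).
Proof. by move=> ip; left; apply: mem_nth. Qed.

Lemma is_collider_induced i : is_collider Et x p i <-> is_collider E x p i.
Proof.
split=> -[i_gt0 [ip [Ei1 Ei2]]]; do 2!split=> //; first by split; [case: Ei1|case: Ei2].
have i1p : i.-1 < size p by apply: leq_ltn_trans (leq_pred i) (ltnW ip).
by repeat split=> //; apply: nth_collider_closure => //; apply: ltnW.
Qed.

Lemma desc_induced_collider i w :
  is_collider E x p i -> desc E (nth x p i) w -> desc Et (nth x p i) w.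
Proof.
move=> coll_i /clos_rt_rtn1_iff.
elim=> [|u v Euv /clos_rt_rtn1_iff desc_u IH]; first exact: rt_refl.
have desc_v : desc E (nth x p i) v by apply: rt_trans desc_u _; apply: rt_step.
apply: rt_trans IH _; apply: rt_step.
by split=> //; split; right; exists i.
Qed.

Lemma is_xy_path_induced y : is_xy_path E x y p -> is_xy_path Et x y p.
Proof.
move=> [p_nil [hp [lp [up adjp]]]]; do 4!split=> //; move=> i ip.
have [i_p i1_p] : i < size p /\ i.+1 < size p by split=> //; apply: ltnW.
by case: (adjp i ip) => ?; [left|right]; repeat split=> //; apply: nth_collider_closure.
Qed.

Lemma Z_active_induced Z : Z_active E x Z p -> Z_active Et x Z p.
Proof.
move=> actp i ip; case: (actp i ip) => act_coll act_ncoll; split.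
  move/is_collider_induced => coll_i.
  case: (act_coll coll_i) => [|[w [desc_w wZ]]]; first by left.
  by right; exists w; split=> //; apply: desc_induced_collider.
by move=> ncoll; apply: act_ncoll => /is_collider_induced.
Qed.

Lemma active_path_collider_tree y Z :
  is_xy_path E x y p -> Z_active E x Z p ->
  collider_tree E collider_closure Et x y p /\ Z_active Et x Z p.
Proof.
move=> path_p act_p; split; last exact: Z_active_induced.
split; first by move=> u v [].
split; first exact: is_xy_path_induced.
split; first exact: nth_collider_closure.
move=> w [-> //|[i [coll_i desc_w]]] _.
by exists i; split; [apply/is_collider_induced | apply: desc_induced_collider].
Qed.

End ColliderClosure.
End ColliderTrees.

Section ConflictFree.
Variable V : finType.
Implicit Types (E : V -> V -> Prop) (S : sent (D_ds V) -> Prop).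

Definition arrows E (s : sent_ds V) := exists u v, E u v /\ s = SA (Arr u v).

Lemma derives_arrows E q :
  rule_ds q (arrows E) -> (forall u v, E u v -> u != v) -> (exists u v, E u v) ->
  derives (D := D_ds V) (arrows E) q.
Proof.
move=> qE irrE [u [v Euv]].
pose all_arrows := [seq SA (Arr pr.1 pr.2) | pr <- enum {: V * V}].
apply: (derives_by_rule (D := D_ds V) (l := all_arrows)) => //.
- by move=> _ [a [b [Eab ->]]]; apply: irrE.
- by exists (SA (Arr u v)), u, v.
move=> _ [a [b [_ ->]]]; apply/List.in_map_iff; exists (a, b); split=> //.
by apply/InP; rewrite mem_enum.
Qed.

Lemma arrows_attack S E a :
  asm_set S -> (forall u v, E u v -> G_of S u v) -> (exists u v, E u v) ->
  S (SA a) -> rule_ds (SC a) (arrows E) -> attacks S S.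
Proof.
move=> asmS ES edge Sa rule_a; exists (arrows E); split.
  by move=> _ [u [v [Euv ->]]]; apply: ES.
exists (SA a); split=> //; apply: derives_arrows => // u v /ES; apply: asmS.
Qed.

Lemma conflict_free_acyclic S :
  asm_set S -> conflict_free S -> acyclic (G_of S).
Proof.
move=> asmS cfS u v Guv /desc_walk [s [last_u walk]].
pose cyc a b := (a, b) \in zip (u :: v :: s) (v :: s).
have cycG a b : cyc a b -> G_of S a b.
  by rewrite /cyc /= in_cons => /orP[/eqP[-> ->] //|]; apply: walk.
apply: cfS; apply: (arrows_attack (E := cyc) (a := Arr u v)) => //.
- by exists u, v; rewrite /cyc /= in_cons eqxx.
apply: (R_cycle (x0 := u)) => //; last by rewrite /= in_cons eqxx.
by apply: zip_path => a b /cycG; apply: asmS.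
Qed.

Lemma conflict_free_d_separated S x y (Z : {set V}) :
  asm_set S -> conflict_free S -> x != y -> x \notin Z -> y \notin Z ->
  S (SA (indep x y Z)) -> d_separated (G_of S) x y Z.
Proof.
move=> asmS cfS neq_xy xZ yZ S_ind [p [path_p act_p]].
have acyclic_G := conflict_free_acyclic asmS cfS.
have [tree_p act_tree] := active_path_collider_tree path_p act_p.
have [sub_tree [path_tree _]] := tree_p.
apply: cfS; apply: (arrows_attack asmS _ (xy_path_edge neq_xy path_tree) S_ind).
  by move=> u v /sub_tree[].
exact: R_dsep neq_xy xZ yZ acyclic_G tree_p act_tree.
Qed.

End ConflictFree.

Theorem proposition3 (V : finType) (S : sent (D_ds V) -> Prop) :
  complete S ->
  forall (x y : V) (Z : {set V}),
    x != y -> x \notin Z -> y \notin Z ->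
    S (SA (indep x y Z)) ->
    d_separated (G_of S) x y Z.
Proof.
move=> [[asmS [cfS _]] _] x y Z.
exact: conflict_free_d_separated.
Qed.
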